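(* Fix an integer $k$ and let $\mathcal V_k$ be as defined in the context. Define constants $M_{t,j}$ as in the context. Then the max-min problem $$\max_{v\in\mathcal V_k}\ \min_{y\in[0,1]^{\mathcal N}}\Big\{\sum_{i=1}^m\alpha_iy_{J_i} : y_{J''}-y_J\le1-v_t,\ y_{J''}-y_{J'}\le1-v_t,\ y_J+y_{J'}-y_{J''}\le2-v_t\ \ \forall t=(J,J',J'')\in\mathcal T\Big\}$$ is equivalent to the mixed-integer program $$\max\ -\sum_{t\in\mathcal T}\lambda_{t,3}-\sum_{J\in\mathcal N}\mu_J$$ over $v\in\mathcal V_k$, $\lambda=(\lambda_{t,j})_{t\in\mathcal T,j=1,2,3}\ge0$, $\mu=(\mu_J)_{J\in\mathcal N}\ge0$, subject to, for every $J\in\mathcal N$, $\beta_J+\sum_{t:\mathsf{tail1}(t)=J}(-\lambda_{t,1}+\lambda_{t,3})+\sum_{t:\mathsf{tail2}(t)=J}(-\lambda_{t,2}+\lambda_{t,3})+\sum_{t:\mathsf{head}(t)=J}(\lambda_{t,1}+\lambda_{t,2}-\lambda_{t,3})+\mu_J\ge0,$ and $\lambda_{t,j}\le M_{t,j}v_t$ for all $t\in\mathcal T$, $j=1,2,3$; in the sense that for each fixed $v\in\mathcal V_k$ the value of the inner minimization equals the maximum of the MIP objective over $(\lambda,\mu)$ with that $v$, so the two problems have the same optimal value and the same maximizing vectors $v$.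
   Context: A multilinear program has data $n,m$, coefficients $\alpha_i\in\mathbb{R}$ and nonempty index sets $J_i\subseteq[n]$. Let $\mathcal N_i=\{J:\emptyset\ne J\subseteq J_i\}$, $\mathcal N=\bigcup_i\mathcal N_i$, $\beta_J=\sum_{i:J_i=J}\alpha_i$ for $J\in\mathcal N$, and $\eta=-\sum_i\min(0,\alpha_i)$. A triple is $t=(J,J',J'')$ with $J''\in\mathcal N$, $|J''|\ge2$, $J,J'$ nonempty, disjoint, $J\cup J'=J''$, listed with $J,J'$ in lexicographic order; $\mathsf{tail1}(t)=J$, $\mathsf{tail2}(t)=J'$, $\mathsf{head}(t)=J''$, $\mathsf{tails}(t)=\{J,J'\}$. $\mathcal T$ is the set of all triples and $\mathcal T_i=\{t\in\mathcal T:\mathsf{head}(t)\in\mathcal N_i\}$. $\mathcal V$ is the set of $v\in\{0,1\}^{\mathcal T}$ for which there exist $u_i\in\{0,1\}^{\mathcal T_i}$ ($i\in[m]$) with: $\sum_{t\in\mathcal T_i:\mathsf{head}(t)=J_i}u_{i,t}=1$ for all $i$ with $|J_i|>1$; $\sum_{t\in\mathcal T_i:\mathsf{head}(t)=J}u_{i,t}=\sum_{t\in\mathcal T_i:J\in\mathsf{tails}(t)}u_{i,t}$ for all $i$ and all $J\in\mathcal N_i$ with $2\le|J|<|J_i|$; and $u_{i,t}\le v_t$ for all $i$, $t\in\mathcal T_i$. $\mathcal V_k=\{v\in\mathcal V:\|v\|_1\le k\}$. The constants: $M_{t,3}=\eta$ for all $t$; for $j=1,2$ define recursively by increasing $|J|$: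 $R_J=\max\big(0,\ \beta_J+\eta+\sum_{t\in\mathcal T:\mathsf{head}(t)=J}(M_{t,1}+M_{t,2})\big)$ (the sum is empty when $|J|=1$), and set $M_{t,1}=R_{\mathsf{tail1}(t)}$, $M_{t,2}=R_{\mathsf{tail2}(t)}$ (well defined since tails are strictly smaller than heads). *)

From HB Require Import structures.
From mathcomp Require Import all_boot all_order all_algebra.
Set Implicit Arguments. Unset Strict Implicit. Unset Printing Implicit Defensive.
Import Order.TTheory GRing.Theory Num.Theory.

Fixpoint lexlt (s t : seq nat) : bool :=
  match s, t with
  | [::], [::] => false
  | [::], _ :: _ => true
  | _ :: _, [::] => false
  | x :: s', y :: t' => (x < y) || ((x == y) && lexlt s' t')
  end.

Section MultilinearProgram.
Variables (n m : nat) (Js : 'I_m -> {set 'I_n}).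

Definition inNi (i : 'I_m) (J : {set 'I_n}) : bool := (J != set0) && (J \subset Js i).
Definition inN (J : {set 'I_n}) : bool := [exists i, inNi i J].

Definition setseq (J : {set 'I_n}) : seq nat := sort leq [seq val x | x in J].

(* (J, J') with J'' = J :|: J' *)
Definition is_triple (p : {set 'I_n} * {set 'I_n}) : bool :=
  [&& inN (p.1 :|: p.2), 1 < #|p.1 :|: p.2|, p.1 != set0, p.2 != set0,
      [disjoint p.1 & p.2] & lexlt (setseq p.1) (setseq p.2)].

Definition triple := {p : {set 'I_n} * {set 'I_n} | is_triple p}.

Definition tail1 (t : triple) : {set 'I_n} := (val t).1.
Definition tail2 (t : triple) : {set 'I_n} := (val t).2.
Definition head (t : triple) : {set 'I_n} := tail1 t :|: tail2 t.

Definition inTi (i : 'I_m) (t : triple) : bool := inNi i (head t).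

(* v \in V ; u_i is represented by u i restricted to T_i *)
Definition inV (v : triple -> bool) : Prop :=
  exists u : 'I_m -> triple -> bool,
    [/\ forall i, 1 < #|Js i| ->
          (\sum_(t | inTi i t && (head t == Js i)) (u i t : nat))%N = 1%N,
        forall i J, inNi i J -> 2 <= #|J| -> #|J| < #|Js i| ->
          (\sum_(t | inTi i t && (head t == J)) (u i t : nat))%N =
          (\sum_(t | inTi i t && ((J == tail1 t) || (J == tail2 t))) (u i t : nat))%N
      & forall i t, inTi i t -> (u i t <= v t)%N].

Definition inVk (k : nat) (v : triple -> bool) : Prop :=
  inV v /\ (\sum_t (v t : nat) <= k)%N.

Variables (R : realFieldType) (alpha : 'I_m -> R).
Local Open Scope ring_scope.

Definition beta (J : {set 'I_n}) : R := \sum_(i | Js i == J) alpha i.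
Definition eta : R := - \sum_i Num.min 0 (alpha i).

(* R_J computed with fuel d >= |J| (recursion on |J|) *)
Fixpoint Rfuel (d : nat) (J : {set 'I_n}) : R :=
  match d with
  | O => 0
  | d'.+1 => Num.max 0 (beta J + eta +
              \sum_(t | head t == J) (Rfuel d' (tail1 t) + Rfuel d' (tail2 t)))
  end.
Definition Rconst (J : {set 'I_n}) : R := Rfuel #|J| J.

Definition M1 (t : triple) : R := Rconst (tail1 t).
Definition M2 (t : triple) : R := Rconst (tail2 t).
Definition M3 (t : triple) : R := eta.

(* inner minimization problem (y indexed by all subsets; only J \in N matter) *)
Definition inner_obj (y : {set 'I_n} -> R) : R := \sum_i alpha i * y (Js i).
Definition inner_feas (v : triple -> bool) (y : {set 'I_n} -> R) : Prop :=
  (forall J, inN J -> 0 <= y J <= 1) /\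
  (forall t : triple,
     [/\ y (head t) - y (tail1 t) <= 1 - (v t)%:R,
         y (head t) - y (tail2 t) <= 1 - (v t)%:R
       & y (tail1 t) + y (tail2 t) - y (head t) <= 2 - (v t)%:R]).

Definition inner_min (v : triple -> bool) (c : R) : Prop :=
  (exists y, inner_feas v y /\ inner_obj y = c) /\
  (forall y, inner_feas v y -> c <= inner_obj y).

Definition mip_obj (l3 : triple -> R) (mu : {set 'I_n} -> R) : R :=
  - \sum_t l3 t - \sum_(J | inN J) mu J.
Definition mip_feas (v : triple -> bool) (l1 l2 l3 : triple -> R)
    (mu : {set 'I_n} -> R) : Prop :=
  [/\ forall t, [/\ 0 <= l1 t, 0 <= l2 t & 0 <= l3 t],
      forall J, inN J -> 0 <= mu J,
      forall J, inN J ->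
        0 <= beta J
             + \sum_(t | tail1 t == J) (- l1 t + l3 t)
             + \sum_(t | tail2 t == J) (- l2 t + l3 t)
             + \sum_(t | head t == J) (l1 t + l2 t - l3 t)
             + mu J
    & forall t, [/\ l1 t <= M1 t * (v t)%:R, l2 t <= M2 t * (v t)%:R
                  & l3 t <= M3 t * (v t)%:R]].

Definition mip_max (v : triple -> bool) (c : R) : Prop :=
  (exists l1 l2 l3 mu, mip_feas v l1 l2 l3 mu /\ mip_obj l3 mu = c) /\
  (forall l1 l2 l3 mu, mip_feas v l1 l2 l3 mu -> mip_obj l3 mu <= c).

End MultilinearProgram.

From Pilot Require Import Defs.
From HB Require Import structures.
From mathcomp Require Import all_boot all_order all_algebra.
From mathcomp Require Import ring lra.
Import Order.TTheory GRing.Theory Num.Theory.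
Set Implicit Arguments. Unset Strict Implicit. Unset Printing Implicit Defensive.
Local Open Scope ring_scope.

(* For fixed v the inner problem is a linear program in y that is feasible
   (y = 0) and bounded below by -eta, so LP strong duality, proved here by
   Fourier-Motzkin elimination, gives an optimal y and a dual solution of the
   same value. The LP dual is the MIP with v fixed, without the big-M bounds:
   multipliers of constraints switched off by v_t = 0 are zero, and the dual
   constraint at J together with a dual value >= -eta bounds lambda_{t,3} by
   eta and, by induction on |J|, the multipliers of the triples with tail J by
   R_J. So the bounds cut off no dual optimum, and the two optima coincide. *)

Section RealSeq.
Variable R : realFieldType.

Lemma seq_argmax (T : choiceType) (f : T -> R) (s : seq T) x0 : x0 \in s ->
  exists2 x, x \in s & forall y, y \in s -> f y <= f x.
Proof.
move=> s_x0; pose i0 : seq_sub s := SeqSub s_x0.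
case: (arg_maxP (fun i : seq_sub s => f (val i)) (isT : predT i0)) => i _ imax.
by exists (val i) => [|y s_y]; [exact: valP | exact: (imax (SeqSub s_y))].
Qed.

Lemma exists_between (ls us : seq R) :
  (forall l u, l \in ls -> u \in us -> l <= u) ->
  exists s, (forall l, l \in ls -> l <= s) /\ (forall u, u \in us -> s <= u).
Proof.
case: ls => [|l0 ls] le_lu.
  case: us {le_lu} => [|u0 us]; first by exists 0.
  have [s us_s smin] := seq_argmax (fun u => - u) (mem_head u0 us).
  by exists s; split=> // u /smin; rewrite lerN2.
have [s ls_s smax] := seq_argmax id (mem_head l0 ls).
by exists s; split=> [//|u us_u]; exact: le_lu.
Qed.

(* A pair (a, b) encodes the inequality a z <= b on a single unknown z. *)
Lemma least_solution (P : seq (R * R)) z1 d :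
  (forall p, p \in P -> p.1 * z1 <= p.2) ->
  (forall z, (forall p, p \in P -> p.1 * z <= p.2) -> d <= z) ->
  exists2 p, p \in P & p.1 < 0 /\ forall q, q \in P -> q.1 * (p.2 / p.1) <= q.2.
Proof.
move=> P_z1 P_ge_d.
have [p0 P_p0 p0_neg] : exists2 p0, p0 \in P & p0.1 < 0.
  apply/hasP; apply: contraT; rewrite -all_predC => /allP P_ge0.
  suff : d <= Num.min z1 (d - 1) by rewrite le_min => /andP[_]; lra.
  apply: P_ge_d => p P_p; apply: le_trans (P_z1 p P_p); apply: ler_wpM2l.
    by rewrite leNgt; exact: P_ge0.
  by rewrite ge_min lexx.
have N_p0 : p0 \in [seq p <- P | p.1 < 0] by rewrite mem_filter p0_neg P_p0.
have [p + pmax] := seq_argmax (fun p : R * R => p.2 / p.1) N_p0.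
rewrite mem_filter => /andP[p_neg P_p]; exists p => //; split=> // q P_q.
case: (ltP q.1 0) => q_sign.
- have : q.2 / q.1 <= p.2 / p.1 by apply: pmax; rewrite mem_filter q_sign P_q.
  by rewrite ler_ndivrMr // mulrC.
- apply: le_trans (P_z1 q P_q); apply: ler_wpM2l => //.
  by rewrite ler_ndivrMr // mulrC; exact: P_z1.
Qed.
End RealSeq.

Section FourierMotzkin.
Variables (R : realFieldType) (V : finType).

(* A row (a, b) encodes the inequality a . y <= b; R^o makes rows an lmodType R. *)
Local Notation row := ({ffun V -> R^o} * R^o)%type.

Lemma scale_regular (a b : R) : a *: (b : R^o) = a * b. Proof. by []. Qed.

Definition row_lhs (r : row) (y : V -> R) : R := \sum_v r.1 v * y v.
Definition satisfies (r : row) (y : V -> R) : Prop := row_lhs r y <= r.2.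

Inductive cone (S : row -> Prop) : row -> Prop :=
| cone_gen r of S r : cone S r
| cone_add r1 r2 of cone S r1 & cone S r2 : cone S (r1 + r2)
| cone_scale c r of 0 <= c & cone S r : cone S (c *: r).

Lemma row_lhsD r1 r2 y : row_lhs (r1 + r2) y = row_lhs r1 y + row_lhs r2 y.
Proof. by rewrite /row_lhs -big_split; apply: eq_bigr => v _; rewrite ffunE mulrDl. Qed.

Lemma row_lhsZ c r y : row_lhs (c *: r) y = c * row_lhs r y.
Proof. by rewrite /row_lhs mulr_sumr; apply: eq_bigr => v _; rewrite ffunE mulrA. Qed.

Lemma cone_satisfies (S : row -> Prop) y :
  (forall r, S r -> satisfies r y) -> forall r, cone S r -> satisfies r y.
Proof.
move=> Sy r; elim=> {r} [r /Sy //|r1 r2 _ y1 _ y2|c r c0 _ yr].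
- by rewrite /satisfies row_lhsD; exact: lerD.
- by rewrite /satisfies row_lhsZ; exact: ler_wpM2l.
Qed.

Lemma cone_trans (S S' : row -> Prop) :
  (forall r, S' r -> cone S r) -> forall r, cone S' r -> cone S r.
Proof.
move=> S'S r; elim=> {r} [r /S'S //|r1 r2 _ c1 _ c2|c r c0 _ cr].
- exact: cone_add.
- exact: cone_scale.
Qed.

Lemma cone_coord0 (S : row -> Prop) (j : V) :
  (forall r, S r -> r.1 j = 0) -> forall r, cone S r -> r.1 j = 0.
Proof.
move=> Sj r; elim=> {r} [r /Sj //|r1 r2 _ e1 _ e2|c r _ _ e].
- by rewrite [LHS]ffunE e1 e2 addr0.
- by rewrite [LHS]ffunE e scaler0.
Qed.

Lemma cone_combination (K : finType) (g : K -> row) r :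
  cone (fun r => r \in map g (enum K)) r ->
  exists2 lam : K -> R, forall k, 0 <= lam k & r = \sum_k lam k *: g k.
Proof.
elim=> {r} [r /mapP [k0 _ ->]|r1 r2 _ [l1 l1_ge0 ->] _ [l2 l2_ge0 ->]|c r c0 _ [l l_ge0 ->]].
- exists (fun k => (k == k0)%:R) => [k|]; first exact: ler0n.
  by rewrite (bigD1 k0) //= eqxx scale1r big1 ?addr0 // => k /negPf ->; rewrite scale0r.
- exists (fun k => l1 k + l2 k) => [k|]; first exact: addr_ge0.
  by rewrite -big_split; apply: eq_bigr => k _; rewrite scalerDl.
- exists (fun k => c * l k) => [k|]; first exact: mulr_ge0.
  by rewrite scaler_sumr; apply: eq_bigr => k _; rewrite scalerA.
Qed.

Definition cancel_var (j : V) (p q : row) : row := (- q.1 j) *: p + p.1 j *: q.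

Definition elim_var (j : V) (L : seq row) : seq row :=
  [seq r : row <- L | r.1 j == 0] ++
  [seq cancel_var j p q | p <- [seq r : row <- L | 0 < r.1 j], q <- [seq r : row <- L | r.1 j < 0]].

Lemma elim_var_coord0 j L r : r \in elim_var j L -> r.1 j = 0.
Proof.
rewrite mem_cat => /orP[]; first by rewrite mem_filter => /andP[/eqP].
by case/allpairsP => [[p q]] /= [_ _ ->]; rewrite [LHS]ffunE !ffunE /= !scale_regular; ring.
Qed.

Lemma elim_var_cone j L r : r \in elim_var j L -> cone (fun r => r \in L) r.
Proof.
rewrite mem_cat => /orP[]; first by rewrite mem_filter => /andP[_ Lr]; exact: cone_gen.
case/allpairsP => [[p q]] /= []; rewrite !mem_filter => /andP[pj Lp] /andP[qj Lq] ->.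
apply: cone_add; apply: cone_scale; rewrite ?oppr_ge0 ?ltW //; exact: cone_gen.
Qed.

Definition set_var (y : V -> R) (j : V) (s : R) : V -> R :=
  fun v => if v == j then s else y v.

Lemma row_lhs_set_var r y j s : row_lhs r (set_var y j s) = row_lhs r y + r.1 j * (s - y j).
Proof.
rewrite /row_lhs (bigD1 j) //= [in RHS](bigD1 j) //= /set_var eqxx.
rewrite (eq_bigr (fun v => r.1 v * y v)); last by move=> v /negPf ->.
ring.
Qed.

(* Each row with r_j <> 0 bounds y_j on one side; the combined rows say that
   every lower bound is below every upper bound. *)
Lemma elim_var_lift j L y : (forall r, r \in elim_var j L -> satisfies r y) ->
  exists s, forall r, r \in L -> satisfies r (set_var y j s).
Proof.
move=> elim_y; pose shift (r : row) := (r.2 - row_lhs r y) / r.1 j.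
have [s [low upp]] : exists s,
    (forall l, l \in [seq shift q | q <- [seq r : row <- L | r.1 j < 0]] -> l <= s) /\
    (forall u, u \in [seq shift p | p <- [seq r : row <- L | 0 < r.1 j]] -> s <= u).
  apply: exists_between => _ _ /mapP[q + ->] /mapP[p + ->].
  rewrite !mem_filter => /andP[qj Lq] /andP[pj Lp].
  have : satisfies (cancel_var j p q) y.
    by apply: elim_y; rewrite mem_cat; apply/orP; right; apply/allpairsP;
      exists (p, q); rewrite /= !mem_filter pj qj Lp Lq.
  rewrite /satisfies row_lhsD !row_lhsZ /= !scale_regular => comb.
  have nqj : 0 < - q.1 j by rewrite oppr_gt0.
  rewrite -subr_ge0 -(pmulr_rge0 _ (mulr_gt0 pj nqj)).
  suff -> : p.1 j * - q.1 j * (shift p - shift q) =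
            - q.1 j * (p.2 - row_lhs p y) + p.1 j * (q.2 - row_lhs q y) by lra.
  by rewrite /shift; field; rewrite (gt_eqF pj) (lt_eqF qj).
exists (y j + s) => r Lr; rewrite /satisfies row_lhs_set_var addrAC subrr add0r.
case: (ltrgtP (r.1 j) 0) => rj.
- have : shift r <= s by apply: low; apply: map_f; rewrite mem_filter rj.
  by rewrite ler_ndivrMr // => h; lra.
- have : s <= shift r by apply: upp; apply: map_f; rewrite mem_filter rj.
  by rewrite ler_pdivlMr // => h; lra.
- have : satisfies r y by apply: elim_y; rewrite mem_cat mem_filter rj eqxx Lr.
  by rewrite /satisfies rj mul0r addr0.
Qed.

Fixpoint elim_vars (js : seq V) (L : seq row) : seq row :=
  if js is j :: js' then elim_var j (elim_vars js' L) else L.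

Lemma elim_vars_cone js L r : r \in elim_vars js L -> cone (fun r => r \in L) r.
Proof.
elim: js r => [|j js IH] r /=; first exact: cone_gen.
by move/elim_var_cone; apply: cone_trans.
Qed.

Lemma elim_vars_coord0 js L r j : r \in elim_vars js L -> j \in js -> r.1 j = 0.
Proof.
elim: js r => [|j0 js IH] r //= Lr; rewrite inE => /orP[/eqP ->|js_j].
- exact: elim_var_coord0 Lr.
- by apply: (cone_coord0 _ (elim_var_cone Lr)) => r' /IH; apply.
Qed.

Lemma elim_vars_lift js L y : (forall r, r \in elim_vars js L -> satisfies r y) ->
  exists2 y', forall v, v \notin js -> y' v = y v & forall r, r \in L -> satisfies r y'.
Proof.
elim: js y => [|j js IH] y /= elim_y; first by exists y.
have [s Ls] := elim_var_lift elim_y.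
have [y' y'E Ly'] := IH _ Ls.
exists y' => // v; rewrite inE negb_or => /andP[vj vjs].
by rewrite y'E // /set_var (negPf vj).
Qed.

End FourierMotzkin.

Lemma sum_option (R : nmodType) (X : finType) (F : option X -> R) :
  \sum_v F v = F None + \sum_x F (Some x).
Proof.
rewrite (bigD1 None) //=; congr (_ + _).
by rewrite (reindex_omap Some id) //=; [apply: eq_bigl => x; rewrite eqxx | case].
Qed.

Section LPDuality.
Variables (R : realFieldType) (X I : finType) (A : I -> X -> R) (b : I -> R) (c : X -> R).

Definition lp_feasible (y : X -> R) : Prop := forall i, \sum_x A i x * y x <= b i.
Definition lp_cost (y : X -> R) : R := \sum_x c x * y x.
Definition dual_feasible (lam : I -> R) : Prop :=
  (forall i, 0 <= lam i) /\ forall x, c x + \sum_i lam i * A i x = 0.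
Definition dual_value (lam : I -> R) : R := - \sum_i lam i * b i.

Lemma weak_duality lam y : dual_feasible lam -> lp_feasible y -> dual_value lam <= lp_cost y.
Proof.
move=> [lam_ge0 lam_c] y_feas.
have -> : lp_cost y = - \sum_i lam i * \sum_x A i x * y x.
  rewrite /lp_cost (eq_bigr (fun x => - \sum_i lam i * A i x * y x)) => [|x _]; last first.
    have -> : c x = - \sum_i lam i * A i x by apply/eqP; rewrite -addr_eq0 lam_c.
    by rewrite mulNr mulr_suml.
  rewrite sumrN exchange_big /=; congr (- _); apply: eq_bigr => i _.
  by rewrite mulr_sumr; apply: eq_bigr => x _; rewrite mulrA.
by rewrite lerN2; apply: ler_sum => i _; exact: ler_wpM2l.
Qed.

(* The epigraph system {A y <= b, c . y <= z}, the unknown z being [None]. *)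
Definition epi_row (k : option I) : {ffun option X -> R^o} * R^o :=
  match k with
  | None => ([ffun v => if v is Some x then c x else -1], 0)
  | Some i => ([ffun v => if v is Some x then A i x else 0], b i)
  end.
Definition epi_rows := map epi_row (enum {: option I}).

Lemma satisfies_epi_rows w :
  (forall r, r \in epi_rows -> satisfies r w) <->
  lp_feasible (fun x => w (Some x)) /\ lp_cost (fun x => w (Some x)) <= w None.
Proof.
have lhsE k : row_lhs (epi_row k) w = match k with
    | None => lp_cost (fun x => w (Some x)) - w None
    | Some i => \sum_x A i x * w (Some x) end.
  rewrite /row_lhs sum_option; case: k => [i|] /=; rewrite ffunE.
    by rewrite mul0r add0r; apply: eq_bigr => x _; rewrite ffunE.
  by rewrite addrC mulN1r; congr (_ - _); apply: eq_bigr => x _; rewrite ffunE.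
split=> [w_sat|[w_feas w_cost] _ /mapP[k _ ->]].
- split=> [i|].
    by have := w_sat _ (map_f epi_row (mem_enum _ (Some i))); rewrite /satisfies lhsE.
  by have := w_sat _ (map_f epi_row (mem_enum _ None)); rewrite /satisfies lhsE subr_le0.
- by rewrite /satisfies lhsE; case: k => [i|] //=; rewrite subr_le0.
Qed.

Lemma dual_of_epi_combination r : cone (fun r => r \in epi_rows) r ->
  (forall x, r.1 (Some x) = 0) -> r.1 None < 0 ->
  exists2 lam, dual_feasible lam & dual_value lam = r.2 / r.1 None.
Proof.
move=> /cone_combination[mu mu_ge0 ->].
have coordE v : (\sum_k mu k *: epi_row k).1 v =
    mu None * (if v is Some x then c x else -1)
    + \sum_i mu (Some i) * (if v is Some x then A i x else 0).
  rewrite raddf_sum sum_ffunE sum_option /= !ffunE; congr (_ + _).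
  by apply: eq_bigr => i _; rewrite !ffunE.
have rhsE : (\sum_k mu k *: epi_row k).2 = \sum_i mu (Some i) * b i.
  by rewrite raddf_sum sum_option /= scale_regular mulr0 add0r.
rewrite rhsE coordE => r_x; rewrite big1 => [|i _]; last by rewrite mulr0.
rewrite mulrN1 addr0 oppr_lt0 => mu0.
exists (fun i => mu (Some i) / mu None); first split=> [i|x].
- by rewrite divr_ge0 // ltW.
- have /eqP := r_x x; rewrite coordE addr_eq0 => /eqP mu_c.
  under eq_bigr do rewrite mulrAC.
  rewrite -mulr_suml -[\sum_i _]opprK -mu_c.
  by field; rewrite gt_eqF.
- rewrite /dual_value invrN mulrN mulr_suml; congr (- _).
  by apply: eq_bigr => i _; rewrite mulrAC.
Qed.

(* Fourier-Motzkin eliminates y from the epigraph system, leaving finitely many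
   constraints on z alone; the least feasible z is the optimum, and the row
   attaining it is a nonnegative combination of the original rows, i.e. a dual
   solution. *)
Theorem strong_duality : (exists y, lp_feasible y) ->
  (exists d, forall y, lp_feasible y -> d <= lp_cost y) ->
  exists y lam, [/\ lp_feasible y, dual_feasible lam & lp_cost y = dual_value lam].
Proof.
move=> [y0 y0_feas] [d cost_ge_d].
pose js := map Some (enum X); pose L := elim_vars js epi_rows.
pose point y z : option X -> R := fun v => if v is Some x then y x else z.
have L_lhs r w : r \in L -> row_lhs r w = r.1 None * w None.
  move=> Lr; rewrite /row_lhs sum_option big1 ?addr0 // => x _.
  by rewrite (elim_vars_coord0 Lr) ?mul0r // map_f // mem_enum.
have L_sound y : lp_feasible y -> forall r, r \in L -> r.1 None * lp_cost y <= r.2.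
  move=> y_feas r Lr; rewrite -(L_lhs r (point y (lp_cost y)) Lr).
  by apply: (cone_satisfies _ (elim_vars_cone Lr)); apply/satisfies_epi_rows.
have L_lift z : (forall r, r \in L -> r.1 None * z <= r.2) ->
    exists2 y, lp_feasible y & lp_cost y <= z.
  move=> L_z; have [|w w_js /satisfies_epi_rows[w_feas w_cost]] :=
    @elim_vars_lift _ _ js epi_rows (point y0 z).
    by move=> r Lr; rewrite /satisfies L_lhs //; exact: L_z.
  by exists (fun x => w (Some x)); rewrite // w_js in w_cost; last by apply/mapP; case.
pose P := [seq (r.1 None, r.2) | r : {ffun option X -> R^o} * R^o <- L].
have P_y0 p : p \in P -> p.1 * lp_cost y0 <= p.2.
  by case/mapP=> r Lr ->; exact: L_sound.
have P_ge_d z : (forall p, p \in P -> p.1 * z <= p.2) -> d <= z.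
  move=> P_z; have [y y_feas y_cost] := L_lift z (fun r Lr => P_z _ (map_f _ Lr)).
  exact: le_trans (cost_ge_d y y_feas) y_cost.
have [_ /mapP[r Lr ->] /= [r_neg r_min]] := least_solution P_y0 P_ge_d.
have [lam lam_feas lam_val] := dual_of_epi_combination (elim_vars_cone Lr)
  (fun x => elim_vars_coord0 Lr (map_f Some (mem_enum _ x))) r_neg.
have [y y_feas y_cost] := L_lift _ (fun q Lq => r_min _ (map_f _ Lq)).
exists y, lam; split=> //.
by apply/eqP; rewrite eq_le lam_val y_cost -lam_val weak_duality.
Qed.

End LPDuality.

Section MultilinearDual.
Variables (R : realFieldType) (n m : nat) (alpha : 'I_m -> R) (Js : 'I_m -> {set 'I_n}).

Local Notation T := (triple Js).
Local Notation inN := (inN Js).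

Lemma triple_inN (t : T) : [/\ inN (Defs.head t), inN (tail1 t) & inN (tail2 t)].
Proof.
have /and5P[headN _ t1_0 t2_0 _] := valP t.
have /existsP[i /andP[_ head_sub]] := headN.
have inN_sub J : J != set0 -> J \subset Defs.head t -> inN J.
  by move=> J0 subJ; apply/existsP; exists i; rewrite /inNi J0 (subset_trans subJ head_sub).
by split; [exact: headN | exact: inN_sub t1_0 (subsetUl _ _) | exact: inN_sub t2_0 (subsetUr _ _)].
Qed.

Lemma triple_tails (t : T) :
  [/\ tail1 t != set0, tail2 t != set0 & [disjoint tail1 t & tail2 t]].
Proof. by have /and5P[_ _ ? ? /andP[? _]] := valP t. Qed.

Lemma tail1_neq_tail2 (t : T) : tail1 t != tail2 t.
Proof.
have [_ /set0Pn[x t2_x] disj] := triple_tails t.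
apply/eqP => t12; move: disj; rewrite t12 -setI_eq0 setIid => /eqP t2_0.
by move: t2_x; rewrite t2_0 inE.
Qed.

Lemma tails_proper (t : T) : tail1 t \proper Defs.head t /\ tail2 t \proper Defs.head t.
Proof.
have [/set0Pn[x1 t1_x1] /set0Pn[x2 t2_x2] disj] := triple_tails t.
split; rewrite properEneq ?subsetUl ?subsetUr andbT; apply/eqP => eq_head.
- have : x2 \in tail1 t by rewrite eq_head /Defs.head inE t2_x2 orbT.
  by rewrite (disjointFl disj t2_x2).
- have : x1 \in tail2 t by rewrite eq_head /Defs.head inE t1_x1.
  by rewrite (disjointFr disj t1_x1).
Qed.

Lemma sum_tails_le (f : T -> R) J : (forall t, 0 <= f t) ->
  \sum_(t | tail1 t == J) f t + \sum_(t | tail2 t == J) f t <= \sum_t f t.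
Proof.
move=> f_ge0; rewrite !(big_mkcond (fun t => _ == J)) -big_split /=.
apply: ler_sum => t _; have := tail1_neq_tail2 t.
case: (tail1 t =P J) => [->|_]; case: (tail2 t =P J) => [->|_]; rewrite ?eqxx //= => _.
- by rewrite addr0.
- by rewrite add0r.
- by rewrite addr0.
Qed.

Definition mip_slack (l1 l2 l3 : T -> R) (mu : {set 'I_n} -> R) (J : {set 'I_n}) : R :=
  beta Js alpha J
  + \sum_(t | tail1 t == J) (- l1 t + l3 t)
  + \sum_(t | tail2 t == J) (- l2 t + l3 t)
  + \sum_(t | Defs.head t == J) (l1 t + l2 t - l3 t)
  + mu J.

Lemma eq_mip_slack l1 l2 l3 mu l1' l2' l3' mu' J :
  l1 =1 l1' -> l2 =1 l2' -> l3 =1 l3' -> mu J = mu' J ->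
  mip_slack l1 l2 l3 mu J = mip_slack l1' l2' l3' mu' J.
Proof.
move=> e1 e2 e3 eJ; rewrite /mip_slack eJ.
by congr (_ + _ + _ + _ + _); apply: eq_bigr => t _; rewrite ?e1 ?e2 ?e3.
Qed.

Section BigM.
Variables (l1 l2 l3 : T -> R) (mu : {set 'I_n} -> R).
Hypotheses (l_ge0 : forall t, [/\ 0 <= l1 t, 0 <= l2 t & 0 <= l3 t])
  (mu_ge0 : forall J, inN J -> 0 <= mu J)
  (slack_ge0 : forall J, inN J -> 0 <= mip_slack l1 l2 l3 mu J)
  (obj_ge : - Defs.eta alpha <= mip_obj l3 mu).

Let tail_load J := \sum_(t | tail1 t == J) l1 t + \sum_(t | tail2 t == J) l2 t.

Lemma l1_le_tail_load t : l1 t <= tail_load (tail1 t).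
Proof.
rewrite /tail_load (bigD1 t) //= -addrA lerDl.
by apply: addr_ge0; apply: sumr_ge0 => s _; case: (l_ge0 s).
Qed.

Lemma l2_le_tail_load t : l2 t <= tail_load (tail2 t).
Proof.
rewrite /tail_load [X in _ + X](bigD1 t) //= addrCA lerDl.
by apply: addr_ge0; apply: sumr_ge0 => s _; case: (l_ge0 s).
Qed.

Lemma l3_mu_le_eta : \sum_t l3 t + \sum_(J | inN J) mu J <= Defs.eta alpha.
Proof. by move: obj_ge; rewrite /mip_obj -opprD lerN2. Qed.

Lemma tail_load_le_Rfuel d J : inN J -> (#|J| <= d)%N -> tail_load J <= Rfuel Js alpha d J.
Proof.
elim: d J => [|d IH] J NJ cardJ.
  by move: NJ cardJ; rewrite leqn0 cards_eq0 => /existsP[i /andP[/negPf J0]] _ /eqP/eqP; rewrite J0.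
rewrite /= le_max; apply/orP; right.
have tails_l3_mu :
    \sum_(t | tail1 t == J) l3 t + \sum_(t | tail2 t == J) l3 t + mu J <= Defs.eta alpha.
  apply: le_trans l3_mu_le_eta; apply: lerD.
    by apply: sum_tails_le => t; case: (l_ge0 t).
  by rewrite (bigD1 J) //= lerDl; apply: sumr_ge0 => K /andP[NK _]; exact: mu_ge0.
have head_l3 : 0 <= \sum_(t | Defs.head t == J) l3 t by apply: sumr_ge0 => t _; case: (l_ge0 t).
have head_l12 : \sum_(t | Defs.head t == J) (l1 t + l2 t) <=
    \sum_(t : T | Defs.head t == J) (Rfuel Js alpha d (tail1 t) + Rfuel Js alpha d (tail2 t)).
  apply: ler_sum => t /eqP headJ; have [_ N1 N2] := triple_inN t.
  have [/proper_card lt1 /proper_card lt2] := tails_proper t.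
  rewrite headJ in lt1 lt2.
  apply: lerD; [apply: le_trans (l1_le_tail_load t) (IH _ N1 _)
               |apply: le_trans (l2_le_tail_load t) (IH _ N2 _)];
    by rewrite -ltnS (leq_trans _ cardJ).
have := slack_ge0 NJ; move: tails_l3_mu head_l3 head_l12.
rewrite /mip_slack /tail_load !big_split /= !sumrN.
lra.
Qed.

Lemma mip_bigM t : [/\ l1 t <= M1 alpha t, l2 t <= M2 alpha t & l3 t <= M3 alpha t].
Proof.
have [_ N1 N2] := triple_inN t.
split; rewrite /M1 /M2 /M3 /Rconst.
- exact: le_trans (l1_le_tail_load t) (tail_load_le_Rfuel N1 _).
- exact: le_trans (l2_le_tail_load t) (tail_load_le_Rfuel N2 _).
- apply: le_trans l3_mu_le_eta; rewrite (bigD1 t) //= -addrA lerDl.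
  apply: addr_ge0; first by apply: sumr_ge0 => s _; case: (l_ge0 s).
  by apply: sumr_ge0 => J NJ; exact: mu_ge0.
Qed.

End BigM.

Lemma sum_mul_indicator (I : finType) (f : I -> R) (g : I -> {set 'I_n}) x :
  \sum_i f i * (x == g i)%:R = \sum_(i | g i == x) f i.
Proof. by rewrite [RHS]big_mkcond; apply: eq_bigr => i _; rewrite mulr_natr mulrb eq_sym. Qed.

Section InnerLP.
Hypothesis Js_neq0 : forall i, Js i != set0.
Variable v : T -> bool.

(* Rows of the inner LP: [inl (inl J)] is y_J <= 1 and [inl (inr J)] is
   -y_J <= 0 (for J in N); [inr (inl (inl t))], [inr (inl (inr t))] and
   [inr (inr t)] are the three constraints of t when v_t = 1 (for v_t = 0 they
   are implied by the bounds and replaced by 0 <= 0). *)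
Definition constr := (({set 'I_n} + {set 'I_n}) + ((T + T) + T))%type.

Definition coef (i : constr) (x : {set 'I_n}) : R :=
  match i with
  | inl (inl J) => if inN J then (x == J)%:R else 0
  | inl (inr J) => if inN J then - (x == J)%:R else 0
  | inr (inl (inl t)) => if v t then (x == Defs.head t)%:R - (x == tail1 t)%:R else 0
  | inr (inl (inr t)) => if v t then (x == Defs.head t)%:R - (x == tail2 t)%:R else 0
  | inr (inr t) =>
      if v t then (x == tail1 t)%:R + (x == tail2 t)%:R - (x == Defs.head t)%:R else 0
  end.

Definition rhs (i : constr) : R :=
  match i with
  | inl (inl J) => if inN J then 1 else 0
  | inr (inr t) => if v t then 1 else 0
  | _ => 0
  end.

Definition cost (x : {set 'I_n}) : R := if inN x then beta Js alpha x else 0.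

Lemma sum_coef y i : \sum_x coef i x * y x =
  match i with
  | inl (inl J) => if inN J then y J else 0
  | inl (inr J) => if inN J then - y J else 0
  | inr (inl (inl t)) => if v t then y (Defs.head t) - y (tail1 t) else 0
  | inr (inl (inr t)) => if v t then y (Defs.head t) - y (tail2 t) else 0
  | inr (inr t) => if v t then y (tail1 t) + y (tail2 t) - y (Defs.head t) else 0
  end.
Proof.
have pointE J : \sum_x (x == J)%:R * y x = y J.
  by rewrite (bigD1 J) //= eqxx mul1r big1 ?addr0 // => x /negPf ->; rewrite mul0r.
case: i => [[J|J]|[[t|t]|t]] /=; [case: (inN J) | case: (inN J) | case: (v t) ..];
  try by rewrite big1 // => x _; rewrite mul0r.
- exact: pointE.
- by under eq_bigr do rewrite mulNr; rewrite sumrN pointE.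
- by under eq_bigr do rewrite mulrBl; rewrite sumrB !pointE.
- by under eq_bigr do rewrite mulrBl; rewrite sumrB !pointE.
- by under eq_bigr do rewrite mulrBl mulrDl; rewrite sumrB big_split /= !pointE.
Qed.

Lemma lp_feasible_inner y : lp_feasible coef rhs y <-> inner_feas v y.
Proof.
split=> [y_feas|[y01 y_t] i].
  have y01 J : inN J -> 0 <= y J <= 1.
    move=> NJ; have := y_feas (inl (inl J)); have := y_feas (inl (inr J)).
    by rewrite !sum_coef /= NJ oppr_le0 => -> ->.
  split=> // t; have [Nh N1 N2] := triple_inN t.
  move: (y01 _ Nh) (y01 _ N1) (y01 _ N2) => /andP[? ?] /andP[? ?] /andP[? ?].
  have := y_feas (inr (inl (inl t))); have := y_feas (inr (inl (inr t))).
  have := y_feas (inr (inr t)).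
  by rewrite !sum_coef /=; case: (v t) => /=; split; lra.
rewrite sum_coef; case: i => [[J|J]|[[t|t]|t]] /=;
  try by have [] := y_t t; case: (v t) => /=; lra.
- by case NJ: (inN J) => //; case/andP: (y01 J NJ).
- by case NJ: (inN J) => //; case/andP: (y01 J NJ); rewrite oppr_le0.
Qed.

Lemma inN_Js i : inN (Js i).
Proof. by apply/existsP; exists i; rewrite /inNi Js_neq0 subxx. Qed.

Lemma inner_obj_cost y : inner_obj Js alpha y = lp_cost cost y.
Proof.
rewrite /inner_obj /lp_cost (partition_big Js inN) => [|i _]; last exact: inN_Js.
rewrite [RHS](bigID inN) /= [X in _ = _ + X]big1 ?addr0 => [|x /negPf Nx]; last first.
  by rewrite /cost Nx mul0r.
apply: eq_bigr => J NJ; rewrite /cost NJ /beta mulr_suml.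
by apply: eq_bigr => i /eqP <-.
Qed.

Lemma inner_obj_ge y : inner_feas v y -> - Defs.eta alpha <= inner_obj Js alpha y.
Proof.
move=> [y01 _]; rewrite /Defs.eta opprK /inner_obj; apply: ler_sum => i _.
have /andP[y0 y1] := y01 _ (inN_Js i).
by case: (leP 0 (alpha i)) => alpha_i; [rewrite mulr_ge0 | nra].
Qed.

Definition dual_l1 (lam : constr -> R) (t : T) : R := if v t then lam (inr (inl (inl t))) else 0.
Definition dual_l2 (lam : constr -> R) (t : T) : R := if v t then lam (inr (inl (inr t))) else 0.
Definition dual_l3 (lam : constr -> R) (t : T) : R := if v t then lam (inr (inr t)) else 0.
Definition dual_mu (lam : constr -> R) (J : {set 'I_n}) : R := lam (inl (inl J)).

Lemma dual_value_mip lam : dual_value rhs lam = mip_obj (dual_l3 lam) (dual_mu lam).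
Proof.
have sum_mul0 (K : finType) (f : K -> R) : \sum_k f k * 0 = 0.
  by rewrite big1 // => k _; rewrite mulr0.
rewrite /dual_value /mip_obj !big_sumType /= !sum_mul0 !add0r addr0 [\sum_(J | inN J) _]big_mkcond.
rewrite opprD addrC; congr (- _ - _); apply: eq_bigr => i _.
- by rewrite /dual_l3; case: (v i); rewrite ?mulr1 ?mulr0.
- by rewrite /dual_mu; case: (inN i); rewrite ?mulr1 ?mulr0.
Qed.

Lemma dual_row_expand lam x : inN x ->
  cost x + \sum_i lam i * coef i x =
  mip_slack (dual_l1 lam) (dual_l2 lam) (dual_l3 lam) (dual_mu lam) x - lam (inl (inr x)).
Proof.
move=> Nx.
have gateE (a e : R) (b : bool) : a * (if b then e else 0) = (if b then a else 0) * e.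
  by case: b; rewrite ?mulr0 ?mul0r.
rewrite /cost Nx !big_sumType /=; under eq_bigr do rewrite gateE.
under [\sum_J lam (inl (inr J)) * _]eq_bigr do rewrite gateE mulrN.
under [\sum_t lam (inr (inl (inl t))) * _]eq_bigr do rewrite gateE mulrBr.
under [\sum_t lam (inr (inl (inr t))) * _]eq_bigr do rewrite gateE mulrBr.
under [\sum_t lam (inr (inr t)) * _]eq_bigr do rewrite gateE mulrBr mulrDr.
rewrite sumrN !sumrB big_split /= !sum_mul_indicator !big_pred1_eq Nx.
rewrite /mip_slack /dual_l1 /dual_l2 /dual_l3 /dual_mu !big_split /= !sumrN.
lra.
Qed.

Lemma dual_row_outside lam x : ~~ inN x -> \sum_i lam i * coef i x = 0.
Proof.
move=> Nx; have x_neq J : inN J -> (x == J) = false.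
  by move=> NJ; apply: contraNF Nx => /eqP ->.
rewrite big1 // => -[[J|J]|[[t|t]|t]] _ /=.
1,2: by case NJ: (inN J); rewrite ?x_neq //= ?mulr0n ?oppr0 mulr0.
all: have [Nh N1 N2] := triple_inN t.
all: by rewrite !x_neq //= !mulr0n; case: (v t); ring.
Qed.

Lemma mip_feas_of_dual lam : dual_feasible coef cost lam ->
  - Defs.eta alpha <= dual_value rhs lam ->
  mip_feas alpha v (dual_l1 lam) (dual_l2 lam) (dual_l3 lam) (dual_mu lam).
Proof.
move=> [lam_ge0 lam_row]; rewrite dual_value_mip => value_ge.
have l_ge0 t : [/\ 0 <= dual_l1 lam t, 0 <= dual_l2 lam t & 0 <= dual_l3 lam t].
  by rewrite /dual_l1 /dual_l2 /dual_l3; case: (v t).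
have mu_ge0 J : inN J -> 0 <= dual_mu lam J by move=> _; exact: lam_ge0.
have slack_ge0 J :
    inN J -> 0 <= mip_slack (dual_l1 lam) (dual_l2 lam) (dual_l3 lam) (dual_mu lam) J.
  move=> NJ; have /eqP := dual_row_expand lam NJ.
  by rewrite lam_row eq_sym subr_eq0 => /eqP ->.
split=> // t; have [] := mip_bigM l_ge0 mu_ge0 slack_ge0 value_ge t.
by rewrite /dual_l1 /dual_l2 /dual_l3; case: (v t); rewrite ?mulr1 ?mulr0.
Qed.

Definition dual_of_mip (l1 l2 l3 : T -> R) (mu : {set 'I_n} -> R) (i : constr) : R :=
  match i with
  | inl (inl J) => if inN J then mu J else 0
  | inl (inr J) => if inN J then mip_slack l1 l2 l3 mu J else 0
  | inr (inl (inl t)) => l1 t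
  | inr (inl (inr t)) => l2 t
  | inr (inr t) => l3 t
  end.

Lemma dual_of_mip_feasible l1 l2 l3 mu : mip_feas alpha v l1 l2 l3 mu ->
  dual_feasible coef cost (dual_of_mip l1 l2 l3 mu) /\
  dual_value rhs (dual_of_mip l1 l2 l3 mu) = mip_obj l3 mu.
Proof.
move=> [l_ge0 mu_ge0 slack_ge0 l_le]; set lam := dual_of_mip l1 l2 l3 mu.
have l_off t : ~~ v t -> [/\ l1 t = 0, l2 t = 0 & l3 t = 0].
  move/negPf=> vt; have [a1 a2 a3] := l_ge0 t; have [b1 b2 b3] := l_le t.
  by rewrite vt !mulr0 in b1 b2 b3; split; apply/le_anti/andP.
have e1 t : dual_l1 lam t = l1 t.
  by rewrite /dual_l1; case: (boolP (v t)) => // /l_off[].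
have e2 t : dual_l2 lam t = l2 t.
  by rewrite /dual_l2; case: (boolP (v t)) => // /l_off[].
have e3 t : dual_l3 lam t = l3 t.
  by rewrite /dual_l3; case: (boolP (v t)) => // /l_off[].
split; first split.
- case=> [[J|J]|[[t|t]|t]] /=; try by case: (l_ge0 t).
  + by case NJ: (inN J); rewrite ?mu_ge0.
  + by case NJ: (inN J); rewrite ?slack_ge0.
- move=> x; case: (boolP (inN x)) => Nx; last by rewrite dual_row_outside // /cost (negPf Nx) add0r.
  rewrite dual_row_expand // /= Nx.
  rewrite (eq_mip_slack (l1' := l1) (l2' := l2) (l3' := l3) (mu' := mu)) //.
  + exact: subrr.
  + by rewrite /dual_mu /= Nx.
- rewrite dual_value_mip /mip_obj (eq_bigr _ (fun t _ => e3 t)); congr (_ - _).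
  by apply: eq_bigr => J NJ; rewrite /dual_mu /= NJ.
Qed.

End InnerLP.
End MultilinearDual.

Theorem theorem4 (R : realFieldType) (n m : nat) (alpha : 'I_m -> R)
    (Js : 'I_m -> {set 'I_n}) (hJs : forall i, Js i != set0) (k : nat)
    (v : triple Js -> bool) (hv : inVk k v) :
  exists c : R, inner_min alpha v c /\ mip_max alpha v c.
Proof.
have cost_ge y : lp_feasible (coef R v) (rhs R v) y ->
    - Defs.eta alpha <= lp_cost (cost alpha Js) y.
  move/lp_feasible_inner => y_feas.
  by rewrite -(inner_obj_cost _ hJs); exact: (inner_obj_ge _ hJs y_feas).
have zero_feas : lp_feasible (coef R v) (rhs R v) (fun=> 0).
  by apply/lp_feasible_inner; split=> [J _|t]; [rewrite lexx ler01 | case: (v t) => /=; split; lra].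
have [y [lam [y_feas lam_feas y_opt]]] :=
  strong_duality (ex_intro _ _ zero_feas) (ex_intro _ _ cost_ge).
exists (lp_cost (cost alpha Js) y); split; split.
- by exists y; rewrite (inner_obj_cost _ hJs); split=> //; exact/lp_feasible_inner.
- move=> y' /lp_feasible_inner y'_feas.
  by rewrite (inner_obj_cost _ hJs) y_opt; exact: weak_duality lam_feas y'_feas.
- exists (dual_l1 v lam), (dual_l2 v lam), (dual_l3 v lam), (dual_mu lam).
  split; last by rewrite -dual_value_mip y_opt.
  by apply: mip_feas_of_dual lam_feas _; rewrite -y_opt; exact: cost_ge.
- move=> l1 l2 l3 mu /dual_of_mip_feasible[lam'_feas <-].
  exact: weak_duality lam'_feas y_feas.
Qed.
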